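(* Let $a_1,\dots,a_m\in\{0,1\}^n$ and $\epsilon_1,\dots,\epsilon_m\in\{0,1\}$, and consider the system of $\mathbb{F}_2$-linear equations $a_j\cdot b=\epsilon_j$ ($1\le j\le m$) in the unknown $b\in\{0,1\}^n$. Run the Triangular Basis Algorithm, with dimension $n+1$, on the vectors $x_j=a_j\Vert\epsilon_j\in\{0,1\}^{n+1}$. Then the system has a solution if and only if $av_{n+1}=1$ at the end of the algorithm.
   Context: All arithmetic is over $\mathbb{F}_2$ ($+$ is XOR, $\wedge$ is AND, $\cdot$ is the standard dot product). For a vector $v\in\{0,1\}^N$, $v[i]$ is its $i$-th bit and $v[a..b]$ the substring of bits $a$ through $b$ (empty if $a>b$); $\Vert$ is concatenation. Triangular Basis Algorithm (for vectors of length $N$). Input: $x_1,\dots,x_m\in\{0,1\}^N$ (modified in place). Auxiliary variables: bits $\mathrm{used}_j$ ($1\le j\le m$) initialized to $0$; bits $av_i$ ($1\le i\le N$) initialized to $1$; strings $b_i[(i+1)..N]$ ($1\le i\le N$) initialized to all zeros. The algorithm executes, for $i=1,\dots,N$ (outer loop) and, inside it, for $j=1,\dots,m$ (inner loop), the following four steps in order (iteration $(i,j)$): (1) $\mathrm{used}_j \leftarrow \mathrm{used}_j + (x_j[i]\wedge av_i)$; (2) $av_i\leftarrow av_i + (x_j[i]\wedge \mathrm{used}_j)$ (using the value of $\mathrm{used}_j$ just updated); (3) if $\mathrm{used}_j=1$: $b_i[(i+1)..N]\leftarrow b_i[(i+1)..N]+x_j[(i+1)..N]$; (4) if $x_j[i]=1$: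 $x_j[(i+1)..N]\leftarrow x_j[(i+1)..N]+b_i[(i+1)..N]$. *)

(* F_2 is modelled by bool: + is xor (addb), wedge is andb. *)
From mathcomp Require Import all_boot.
Set Implicit Arguments. Unset Strict Implicit. Unset Printing Implicit Defensive.

(* All indices are 1-based natural numbers, as in the paper.
   A vector v in {0,1}^N is a function nat -> bool of which only the entries
   v 1, ..., v N are meaningful. A family x_1..x_m is a function
   x : nat -> nat -> bool with x j k = x_j[k]. *)

Record tba_state := TBAState {
  st_x    : nat -> nat -> bool;
  st_used : nat -> bool;
  st_av   : nat -> bool;
  st_b    : nat -> nat -> bool   (* st_b i k = b_i[k], meaningful for i<k<=N *)
}.

Definition tba_init (x : nat -> nat -> bool) : tba_state :=
  TBAState x (fun _ => false) (fun _ => true) (fun _ _ => false).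

Definition tba_step (N : nat) (s : tba_state) (i j : nat) : tba_state :=
  let x := st_x s in let used := st_used s in
  let av := st_av s in let b := st_b s in
  let used1 := fun j' => if j' == j then used j (+) (x j i && av i) else used j' in
  let av1 := fun i' => if i' == i then av i (+) (x j i && used1 j) else av i' in
  let b1 := fun i' k => if (i' == i) && used1 j && (i < k <= N)
                        then b i k (+) x j k else b i' k in
  let x1 := fun j' k => if (j' == j) && x j i && (i < k <= N)
                        then x j k (+) b1 i k else x j' k in
  TBAState x1 used1 av1 b1.

Definition tba_run (N m : nat) (x : nat -> nat -> bool) : tba_state :=
  foldl (fun s i => foldl (fun s' j => tba_step N s' i j) s (iota 1 m))
        (tba_init x) (iota 1 N).

Definition dotF2 (n : nat) (a b : nat -> bool) : bool :=
  \big[addb/false]_(1 <= k < n.+1) (a k && b k).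

Definition concat_bit (n : nat) (a : nat -> bool) (e : bool) : nat -> bool :=
  fun k => if k <= n then a k else if k == n.+1 then e else false.

From mathcomp Require Import all_boot zify.

(* Write [x_j = a_j || eps_j] and extend an unknown [b] to [y = b || 1]; then
   [a_j . b = eps_j] for all j iff [y] solves the homogeneous system
   [x_j . y = 0] (over positions 1..N, N = n+1) with [y_N = 1].

   While the algorithm runs we maintain a "reduced" form of the homogeneous
   system with the same solutions: every pivot row i' (with av_i' = 0)
   contributes the equation [y_i' = b_i'[i'+1..N] . y], and every vector x_j
   that is not yet a pivot contributes [x_j[f..N] . y = 0], where the frontier
   f is the first position not yet processed for x_j.  Each iteration (i,j)
   either skips x_j, turns it into the pivot of row i, or eliminates its
   entry i with b_i; all three rewrite the reduced system equivalently.

   At the end only the pivot equations remain; they force [y_N = 0] when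
   av_N = 0, and by back substitution they admit a solution with [y_N = 1]
   when av_N = 1.  This gives both directions of [mainTheorem7]. *)

Set Implicit Arguments.
Unset Strict Implicit.
Unset Printing Implicit Defensive.

Definition dot_from (N lo : nat) (u y : nat -> bool) : bool :=
  \big[addb/false]_(lo <= k < N.+1) (u k && y k).

Lemma dot_from_split N lo u y : lo <= N ->
  dot_from N lo u y = (u lo && y lo) (+) dot_from N lo.+1 u y.
Proof. by move=> le_lo_N; rewrite /dot_from big_ltn. Qed.

Lemma dot_from_nil N lo u y : N < lo -> dot_from N lo u y = false.
Proof. by move=> lt_N_lo; rewrite /dot_from big_geq. Qed.

Lemma eq_dot_from N lo u u' y y' :
  (forall k, lo <= k <= N -> u k = u' k) ->
  (forall k, lo <= k <= N -> y k = y' k) ->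
  dot_from N lo u y = dot_from N lo u' y'.
Proof.
move=> eq_u eq_y; apply: eq_big_nat => k /andP[lo_k lt_k_N].
have k_in : lo <= k <= N by rewrite lo_k -ltnS.
by rewrite eq_u ?eq_y.
Qed.

Lemma dot_from_addl N lo u v y :
  dot_from N lo (fun k => u k (+) v k) y = dot_from N lo u y (+) dot_from N lo v y.
Proof. by rewrite /dot_from -big_split; apply: eq_bigr => k _; rewrite andb_addl. Qed.

Lemma forall_split (P : nat -> Prop) lo hi c : lo <= c <= hi ->
  (forall k, lo <= k <= hi -> P k) <->
  P c /\ (forall k, lo <= k <= hi -> k != c -> P k).
Proof.
move=> c_in; split=> [all_P | [Pc P_other] k k_in].
  by split=> [|k k_in _]; apply: all_P.
by case: (eqVneq k c) => [->|ne_k_c]; [exact: Pc | exact: P_other].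
Qed.

Lemma foldl_iota_ind (S : Type) (P : nat -> S -> Prop) (f : S -> nat -> S) lo t s :
  (forall k s', lo <= k < lo + t -> P k s' -> P k.+1 (f s' k)) ->
  P lo s -> P (lo + t) (foldl f s (iota lo t)).
Proof.
elim: t lo s => [|t IH] lo s step Ps /=; first by rewrite addn0.
rewrite -addSnnS; apply: IH => [k s' k_in|]; apply: step => //; lia.
Qed.

Section TriangularBasis.

Variables (N m : nat) (x0 : nat -> nat -> bool).

(* Before iteration (i,j), vectors x_1..x_(j-1) have been processed for
   position i, the others only up to position i-1. *)
Definition frontier (i j j' : nat) : nat := if j' < j then i.+1 else i.

Lemma frontier_other i j j' : j' != j -> frontier i j.+1 j' = frontier i j j'.
Proof. by move=> ne_j'_j; rewrite /frontier ltnS leq_eqVlt (negbTE ne_j'_j). Qed.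

Lemma frontier_step_range i j j' k :
  frontier i j.+1 j' <= k <= N -> frontier i j j' <= k <= N.
Proof.
case/andP=> le_f_k ->; rewrite andbT; apply: leq_trans le_f_k.
by rewrite /frontier ltnS; case: (ltnP j' j) => [/ltnW ->|_] //; case: ifP.
Qed.

Definition homog_solution (y : nat -> bool) : Prop :=
  forall j, 1 <= j <= m -> dot_from N 1 (x0 j) y = false.

Definition pivot_row (s : tba_state) (i' : nat) (y : nat -> bool) : Prop :=
  ~~ st_av s i' -> y i' = dot_from N i'.+1 (st_b s i') y.

Definition pivot_ok (s : tba_state) (y : nat -> bool) : Prop :=
  forall i', 1 <= i' <= N -> pivot_row s i' y.

Definition row_pending (s : tba_state) (lo j' : nat) (y : nat -> bool) : Prop :=
  ~~ st_used s j' -> dot_from N lo (st_x s j') y = false.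

Definition pending_ok (s : tba_state) (i j : nat) (y : nat -> bool) : Prop :=
  forall j', 1 <= j' <= m -> row_pending s (frontier i j j') j' y.

Definition reduced_solution (s : tba_state) (i j : nat) (y : nat -> bool) : Prop :=
  pivot_ok s y /\ pending_ok s i j y.

Record invariant (s : tba_state) (i j : nat) : Prop := Invariant {
  inv_solutions : forall y, homog_solution y <-> reduced_solution s i j y;
  inv_fresh : forall i' k, i <= i' -> st_av s i' -> st_b s i' k = false;
  inv_cleared : forall j' k, 1 <= j' <= m -> st_used s j' ->
    frontier i j j' <= k <= N -> st_x s j' k = false }.

Record same_state (s s' : tba_state) : Prop := SameState {
  same_x : forall j k, st_x s j k = st_x s' j k;
  same_used : forall j, st_used s j = st_used s' j;
  same_av : forall i, st_av s i = st_av s' i;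
  same_b : forall i k, st_b s i k = st_b s' i k }.

Lemma pivot_row_ext s s' i y : st_av s' i = st_av s i ->
  (forall k, st_b s' i k = st_b s i k) -> pivot_row s' i y <-> pivot_row s i y.
Proof.
move=> eq_av eq_b; rewrite /pivot_row eq_av.
by rewrite (eq_dot_from (fun k _ => eq_b k) (fun k _ => erefl (y k))).
Qed.

Lemma row_pending_ext s s' lo j y : st_used s' j = st_used s j ->
  (forall k, st_x s' j k = st_x s j k) -> row_pending s' lo j y <-> row_pending s lo j y.
Proof.
move=> eq_used eq_x; rewrite /row_pending eq_used.
by rewrite (eq_dot_from (fun k _ => eq_x k) (fun k _ => erefl (y k))).
Qed.

Lemma invariant_same_state s s' i j : same_state s' s ->
  invariant s i j -> invariant s' i j.
Proof.
case=> eq_x eq_used eq_av eq_b [sol fresh cleared]; split.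
- move=> y; rewrite sol; split=> -[piv pend]; split=> [i' i'_in|j' j'_in].
  + by apply/(pivot_row_ext y (eq_av i') (eq_b i')); apply: piv.
  + by apply/(row_pending_ext _ y (eq_used j') (eq_x j')); apply: pend.
  + by apply/(pivot_row_ext y (eq_av i') (eq_b i')); apply: piv.
  + by apply/(row_pending_ext _ y (eq_used j') (eq_x j')); apply: pend.
- by move=> i' k le_i_i'; rewrite eq_av eq_b; apply: fresh.
- by move=> j' k j'_in; rewrite eq_used eq_x; apply: cleared.
Qed.

Lemma reduced_update s s' i j y : 1 <= i <= N -> 1 <= j <= m ->
  (forall i', i' != i -> pivot_row s' i' y <-> pivot_row s i' y) ->
  (forall j', j' != j ->
     row_pending s' (frontier i j j') j' y <-> row_pending s (frontier i j j') j' y) ->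
  (pivot_row s' i y /\ row_pending s' i.+1 j y <-> pivot_row s i y /\ row_pending s i j y) ->
  reduced_solution s' i j.+1 y <-> reduced_solution s i j y.
Proof.
move=> i_in j_in same_piv same_pend same_local.
rewrite /reduced_solution /pivot_ok /pending_ok.
rewrite (forall_split _ i_in) (forall_split (fun k => pivot_row s k y) i_in).
rewrite (forall_split _ j_in) (forall_split (fun k => row_pending s _ k y) j_in).
have [-> ->] : frontier i j.+1 j = i.+1 /\ frontier i j j = i by rewrite /frontier ltnSn ltnn.
split=> -[[piv_i piv_other] [pend_j pend_other]].
- have [piv_i' pend_j'] := proj1 same_local (conj piv_i pend_j).
  split; split=> //.
  + by move=> i' i'_in ne_i'_i; apply/same_piv => //; apply: piv_other.
  + move=> j' j'_in ne_j'_j; apply/same_pend => //.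
    by rewrite -frontier_other //; apply: pend_other.
- have [piv_i' pend_j'] := proj2 same_local (conj piv_i pend_j).
  split; split=> //.
  + by move=> i' i'_in ne_i'_i; apply/same_piv => //; apply: piv_other.
  + move=> j' j'_in ne_j'_j; rewrite frontier_other //.
    by apply/same_pend => //; apply: pend_other.
Qed.

Definition pivot_state (s : tba_state) (i j : nat) : tba_state :=
  TBAState (fun j' k => if (j' == j) && (i < k <= N) then false else st_x s j' k)
           (fun j' => (j' == j) || st_used s j')
           (fun i' => (i' != i) && st_av s i')
           (fun i' k => if (i' == i) && (i < k <= N) then st_x s j k else st_b s i' k).

Definition reduce_state (s : tba_state) (i j : nat) : tba_state :=
  TBAState (fun j' k => if (j' == j) && (i < k <= N) then st_x s j k (+) st_b s i k
                        else st_x s j' k)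
           (st_used s) (st_av s) (st_b s).

(* A pivot vector is zero from its frontier on, so a vector with a nonzero
   entry at the current position is not yet a pivot. *)
Lemma invariant_unused s i j : i <= N -> 1 <= j <= m ->
  invariant s i j -> st_x s j i -> ~~ st_used s j.
Proof.
move=> le_i_N j_in inv xji; apply/negP => used_j.
suff : st_x s j i = false by rewrite xji.
by apply: (inv_cleared inv j_in used_j); rewrite /frontier ltnn leqnn.
Qed.

Lemma step_skip s i j : i <= N -> 1 <= j <= m -> invariant s i j -> ~~ st_x s j i ->
  same_state (tba_step N s i j) s.
Proof.
move=> le_i_N j_in inv /negbTE xji.
have x_zero k : st_used s j -> i < k <= N -> st_x s j k = false.
  move=> used_j /andP[lt_i_k le_k_N]; apply: (inv_cleared inv j_in used_j).
  by rewrite /frontier ltnn le_k_N ltnW.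
split=> [j' k|j'|i'|i' k] /=; rewrite xji /= ?eqxx ?addbF.
- by rewrite andbF.
- by case: eqP => // ->.
- by case: eqP => // ->.
- case: eqP => //= ->; case: ifP => // /and3P[used_j lt_i_k le_k_N].
  by rewrite x_zero ?addbF // lt_i_k.
Qed.

Lemma step_pivot s i j : i <= N -> 1 <= j <= m -> invariant s i j ->
  st_x s j i -> st_av s i -> same_state (tba_step N s i j) (pivot_state s i j).
Proof.
move=> le_i_N j_in inv xji avi.
have /negbTE unused_j := invariant_unused le_i_N j_in inv xji.
have b_zero k : st_b s i k = false by apply: (inv_fresh inv k (leqnn i) avi).
split=> [j' k|j'|i'|i' k] /=; rewrite xji avi unused_j /= ?eqxx ?andbT.
- by case: ifP => // /and3P[_ -> ->]; rewrite b_zero addbb.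
- by case: eqP.
- by case: eqP.
- by case: ifP => // _; rewrite b_zero.
Qed.

Lemma step_reduce s i j : i <= N -> 1 <= j <= m -> invariant s i j ->
  st_x s j i -> ~~ st_av s i -> same_state (tba_step N s i j) (reduce_state s i j).
Proof.
move=> le_i_N j_in inv xji /negbTE navi.
have /negbTE unused_j := invariant_unused le_i_N j_in inv xji.
by split=> [j' k|j'|i'|i' k] //=; rewrite xji navi unused_j ?eqxx //; case: eqP => // ->.
Qed.

Lemma skip_invariant s i j : 1 <= i <= N -> 1 <= j <= m ->
  ~~ st_x s j i -> invariant s i j -> invariant s i j.+1.
Proof.
move=> i_in j_in /negbTE xji [sol fresh cleared]; have /andP[_ le_i_N] := i_in.
split=> // [y|j' k j'_in used_j' /frontier_step_range]; last exact: cleared.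
rewrite sol; apply: iff_sym; apply: reduced_update => //.
by rewrite /row_pending (dot_from_split _ _ le_i_N) xji.
Qed.

(* Making x_j the pivot of row i trades its pending equation, which says
   y_i = x_j[i+1..N] . y because x_j[i] = 1, for the pivot equation of row i. *)
Lemma pivot_invariant s i j : 1 <= i <= N -> 1 <= j <= m ->
  st_x s j i -> st_av s i -> invariant s i j -> invariant (pivot_state s i j) i j.+1.
Proof.
move=> i_in j_in xji avi inv; have /andP[_ le_i_N] := i_in.
have /negbTE unused_j := invariant_unused le_i_N j_in inv xji.
case: inv => sol fresh cleared; split.
- move=> y; rewrite sol; apply: iff_sym; apply: reduced_update => // [i' ne|j' ne|].
  + by apply: pivot_row_ext => /= [|k]; rewrite ?ne // (negbTE ne).
  + by apply: row_pending_ext => /= [|k]; rewrite (negbTE ne).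
  rewrite /pivot_row /row_pending /= eqxx unused_j avi /=.
  rewrite (@eq_dot_from _ _ _ (st_x s j) y y) => [|k ->|] //.
  rewrite (dot_from_split _ _ le_i_N) xji eqxx /=.
  split=> -[piv_i pend_j]; split=> // _.
    by rewrite piv_i // addbb.
  by move: (pend_j isT); case: (y i); case: (dot_from _ _ _ y).
- move=> i' k le_i_i' /= /andP[ne_i'_i avi']; rewrite (negbTE ne_i'_i) /=.
  exact: fresh.
- move=> j' k j'_in /=; case: (eqVneq j' j) => [-> _ | ne_j'_j /= used_j'] f_range.
    by move: f_range; rewrite /frontier ltnSn => /andP[-> ->].
  exact/(cleared _ _ j'_in used_j')/frontier_step_range.
Qed.

(* Eliminating entry i of x_j with the pivot equation y_i = b_i . y keeps
   the pending equation of x_j equivalent, now read from position i+1. *)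
Lemma reduce_invariant s i j : 1 <= i <= N -> 1 <= j <= m ->
  st_x s j i -> ~~ st_av s i -> invariant s i j -> invariant (reduce_state s i j) i j.+1.
Proof.
move=> i_in j_in xji /negbTE navi inv; have /andP[_ le_i_N] := i_in.
have /negbTE unused_j := invariant_unused le_i_N j_in inv xji.
case: inv => sol fresh cleared; split => //.
- move=> y; rewrite sol; apply: iff_sym; apply: reduced_update => // [j' ne|].
    by apply: row_pending_ext => //= k; rewrite (negbTE ne).
  have reduced_x : dot_from N i.+1 (st_x (reduce_state s i j) j) y =
                   dot_from N i.+1 (st_x s j) y (+) dot_from N i.+1 (st_b s i) y.
    by rewrite -dot_from_addl; apply: eq_dot_from => // k /= ->; rewrite eqxx.
  rewrite /pivot_row /row_pending reduced_x (dot_from_split _ _ le_i_N) /=.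
  rewrite navi unused_j xji /=.
  split=> -[piv_i pend_j]; split=> // _; move: (pend_j isT); rewrite (piv_i isT);
    by case: (dot_from _ _ (st_b s i) y); case: (dot_from _ _ (st_x s j) y).
- move=> j' k j'_in /=; case: (eqVneq j' j) => [->|ne_j'_j /= used_j']; first by rewrite unused_j.
  by move/frontier_step_range; apply: cleared.
Qed.

Lemma step_invariant s i j : 1 <= i <= N -> 1 <= j <= m ->
  invariant s i j -> invariant (tba_step N s i j) i j.+1.
Proof.
move=> i_in j_in inv; have /andP[_ le_i_N] := i_in.
have [xji | nxji] := boolP (st_x s j i); last first.
  exact: invariant_same_state (step_skip le_i_N j_in inv nxji)
                              (skip_invariant i_in j_in nxji inv).
have [avi | navi] := boolP (st_av s i).
  exact: invariant_same_state (step_pivot le_i_N j_in inv xji avi)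
                              (pivot_invariant i_in j_in xji avi inv).
exact: invariant_same_state (step_reduce le_i_N j_in inv xji navi)
                            (reduce_invariant i_in j_in xji navi inv).
Qed.

(* At the end of a row every vector has been processed for position i, which
   is exactly the frontier at the start of the next row. *)
Lemma row_end_invariant s i : invariant s i m.+1 -> invariant s i.+1 1.
Proof.
have same_frontier j' : 1 <= j' <= m -> frontier i m.+1 j' = frontier i.+1 1 j'.
  by case/andP=> pos_j' le_j'_m; rewrite /frontier ltnS le_j'_m ltnNge pos_j'.
case=> sol fresh cleared; split.
- move=> y; rewrite sol; split=> -[piv pend]; split=> // j' j'_in.
    by rewrite -same_frontier //; apply: pend.
  by rewrite same_frontier //; apply: pend.
- by move=> i' k /ltnW; apply: fresh.
- by move=> j' k j'_in; rewrite -same_frontier //; apply: cleared.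
Qed.

(* Initially there are no pivots and every frontier is position 1, so the
   reduced system is the input system itself. *)
Lemma init_invariant : invariant (tba_init x0) 1 1.
Proof.
have frontier_init j' : 1 <= j' -> frontier 1 1 j' = 1.
  by move=> pos_j'; rewrite /frontier ltnNge pos_j'.
split=> //= y; split=> [homog | [_ pend] j' j'_in].
  by split=> // j' j'_in _; rewrite frontier_init ?homog //; case/andP: j'_in.
by have := pend j' j'_in isT; rewrite frontier_init //; case/andP: j'_in.
Qed.

Lemma run_invariant : invariant (tba_run N m x0) N.+1 1.
Proof.
rewrite /tba_run -[N.+1]add1n.
apply: (@foldl_iota_ind _ (fun i s => invariant s i 1) _ 1 N _ _ init_invariant)
  => i s i_in inv.
apply: row_end_invariant; rewrite -[m.+1]add1n.
apply: (@foldl_iota_ind _ (fun j s' => invariant s' i j) _ 1 m _ _ inv)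
  => j s' j_in inv'.
by apply: step_invariant => //; lia.
Qed.

Lemma run_solutions y : homog_solution y <-> pivot_ok (tba_run N m x0) y.
Proof.
rewrite (inv_solutions run_invariant y); split=> [[] // | piv]; split=> // j' _ _.
by apply: dot_from_nil; rewrite /frontier; case: ifP.
Qed.

(* Back substitution: pivot equations that leave y_N free (av_N = 1) have a
   solution with y_N = 1, obtained by fixing y_N, y_(N-1), ..., y_1 in turn. *)
Lemma back_substitution s : st_av s N -> exists y : nat -> bool, y N /\ pivot_ok s y.
Proof.
move=> avN.
have partial t : t <= N -> exists y : nat -> bool,
    y N /\ forall i', N - t <= i' <= N -> pivot_row s i' y.
  elim: t => [_ | t IH lt_t_N].
    exists (fun _ => true); split=> // i'; rewrite subn0 -eqn_leq => /eqP <-.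
    by rewrite /pivot_row avN.
  have [y [yN piv]] := IH (ltnW lt_t_N); pose p := N - t.+1.
  have lt_p_N : p < N by rewrite /p; lia.
  exists (fun k => if k == p then dot_from N p.+1 (st_b s p) y else y k).
  split=> [|i' /andP[le_p_i' le_i'_N]]; first by rewrite gtn_eqF.
  have [lt_p_i' | le_i'_p] := ltnP p i'.
    have /piv : N - t <= i' <= N by rewrite le_i'_N andbT; move: lt_p_i'; rewrite /p; lia.
    rewrite /pivot_row gtn_eqF // => piv_i' /piv_i' ->.
    apply: eq_dot_from => // k /andP[lt_i'_k _].
    by rewrite gtn_eqF // (ltn_trans lt_p_i' lt_i'_k).
  have -> : i' = p by apply/eqP; rewrite eqn_leq le_i'_p.
  rewrite /pivot_row eqxx => _; apply: eq_dot_from => // k /andP[lt_p_k _].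
  by rewrite gtn_eqF.
have [y [yN piv]] := partial N (leqnn N).
by exists y; split=> // i' /andP[_ le_i'_N]; apply: piv; rewrite subnn le_i'_N.
Qed.

End TriangularBasis.

Lemma concat_dot n a e y :
  dot_from n.+1 1 (concat_bit n a e) y = dotF2 n a y (+) (e && y n.+1).
Proof.
rewrite /dot_from big_nat_recr //= /concat_bit ltnn eqxx; congr addb.
by apply: eq_big_nat => k /andP[_ lt_k_n]; rewrite -ltnS lt_k_n.
Qed.

Lemma homog_concat n m a eps (y : nat -> bool) : y n.+1 ->
  homog_solution n.+1 m (fun j => concat_bit n (a j) (eps j)) y <->
  forall j, 1 <= j <= m -> dotF2 n (a j) y = eps j.
Proof.
move=> yN; split=> sol j /sol; rewrite concat_dot yN andbT.
  by case: (dotF2 _ _ _); case: (eps j).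
by move=> ->; rewrite addbb.
Qed.

Theorem mainTheorem7 (n m : nat) (a : nat -> nat -> bool) (eps : nat -> bool) :
  (exists b : nat -> bool, forall j, 1 <= j <= m -> dotF2 n (a j) b = eps j)
  <->
  st_av (tba_run n.+1 m (fun j => concat_bit n (a j) (eps j))) n.+1 = true.
Proof.
split=> [[b sol_b] | avN].
- pose y k := if k <= n then b k else true.
  have yN : y n.+1 by rewrite /y ltnn.
  have /run_solutions piv : homog_solution n.+1 m (fun j => concat_bit n (a j) (eps j)) y.
    apply/(homog_concat _ _ _ yN) => j /sol_b <-.
    by apply: eq_dot_from => // k /andP[_ le_k_n]; rewrite /y le_k_n.
  apply/negPn/negP => navN; move: (piv n.+1 (leqnn _) navN).
  by rewrite dot_from_nil ?yN.
- have [y [yN piv]] := back_substitution avN.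
  by exists y; apply/(homog_concat _ _ _ yN)/run_solutions.
Qed.
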